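(* Let $X$ be a separable metrizable space and $A\subsetneq X$ a proper subset. Then $\mathcal{M}(A)$ is of type $Z$ in $\mathcal{M}(X)$. More precisely, for $a\in X\setminus A$, the maps $\Phi_n\colon\mathcal{M}(X)\to\mathcal{M}(X)$, $\Phi_n(u)=a$ on $[0,1/n)$ and $\Phi_n(u)=u$ on $[1/n,1]$, have images disjoint from $\mathcal{M}(A)$ and converge to $\mathrm{id}_{\mathcal{M}(X)}$ uniformly on compact subsets of $\mathcal{M}(X)$. Moreover, $\overline{\mathcal{M}(A)}=\mathcal{M}(\overline{A})$.
   Context: For a separable metrizable space $X$, $\mathcal{M}(X)$ is the space of equivalence classes (modulo equality Lebesgue-a.e. on $[0,1]$) of Lebesgue measurable functions $u\colon[0,1]\to X$, topologized by the metric $(u,w)\mapsto\int_0^1 d(u(t),w(t))\,dt$ for any compatible bounded metric $d$ on $X$. For $A\subset X$, $\mathcal{M}(A)$ is the subset of $\mathcal{M}(X)$ of classes with a representative with values in $A$. A subset $B$ of a metric space $Z$ is of type $Z$ if the continuous maps from the Hilbert cube $Q$ into $Z\setminus B$ are dense in $\mathcal{C}(Q,Z)$ in the topology of uniform convergence. *)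

From mathcomp Require Import all_boot all_order all_algebra.
From mathcomp Require Import all_classical all_reals all_analysis.
Import Order.TTheory GRing.Theory Num.Theory.
Local Open Scope classical_set_scope.
Local Open Scope ring_scope.

Set Implicit Arguments.
Unset Strict Implicit.
Unset Printing Implicit Defensive.

(* The domain type of the completed Lebesgue measure (its carrier is R). *)
Definition LebT (R : realType) :=
  caratheodory_type (R:=R)
    (T:=lebesgue_stieltjes_measure_ocitv_type__canonical__measurable_structure_SemiRingOfSets R)
    (wlength idfun)^*%mu.

Definition I01 (R : realType) : set R := `[(0:R), 1]%classic.

Definition is_metric (R : realType) (X : Type) (d : X -> X -> R) : Prop :=
  (forall x y, 0 <= d x y) /\ (forall x y, d x y = 0 <-> x = y) /\
  (forall x y, d x y = d y x) /\ (forall x y z, d x z <= d x y + d y z).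

Definition bounded_metric (R : realType) (X : Type) (d : X -> X -> R) : Prop :=
  exists M : R, forall x y, d x y <= M.

Definition separable_metric (R : realType) (X : Type) (d : X -> X -> R) : Prop :=
  exists S : set X, countable S /\
    forall x (e : R), 0 < e -> exists y, S y /\ d x y < e.

Definition d_open (R : realType) (X : Type) (d : X -> X -> R) (U : set X) : Prop :=
  forall x, U x -> exists2 e : R, 0 < e & forall y, d x y < e -> U y.

Definition d_closure (R : realType) (X : Type) (d : X -> X -> R) (A : set X) : set X :=
  fun x => forall e : R, 0 < e -> exists y, A y /\ d x y < e.

(* u : [0,1] -> X is Lebesgue measurable (only the values on [0,1] matter):
   preimages of open (hence of Borel) sets are Lebesgue measurable. *)
Definition leb_measurable (R : realType) (X : Type) (d : X -> X -> R)
    (u : R -> X) : Prop :=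
  forall U : set X, d_open d U ->
    measurable ((@I01 R) `&` (u @^-1` U) : set (LebT R)).

Definition ae_eq01 (R : realType) (X : Type) (u w : R -> X) : Prop :=
  {ae (@completed_lebesgue_measure R), forall t : LebT R,
      @I01 R t -> u t = w t}.

(* Representatives of elements of M(X). *)
Definition MX (R : realType) (X : Type) (d : X -> X -> R) : set (R -> X) :=
  fun u => leb_measurable d u.

(* Representatives of elements of M(A): classes having a representative
   with values in A. *)
Definition MA (R : realType) (X : Type) (d : X -> X -> R) (A : set X)
    : set (R -> X) :=
  fun u => leb_measurable d u /\
    exists w : R -> X, leb_measurable d w /\
      (forall t : R, @I01 R t -> A (w t)) /\ ae_eq01 u w.

Definition Mdist (R : realType) (X : Type) (d : X -> X -> R) (u w : R -> X) : R :=
  fine (\int[@completed_lebesgue_measure R]_(t in (@I01 R : set (LebT R)))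
          (d (u t) (w t))%:E)%E.

Definition hcube (R : realType) : set (nat -> R) :=
  fun q => forall i, 0 <= q i <= 1.

(* continuity of f : Q -> M(X), Q with the product topology *)
Definition cont_Q (R : realType) (X : Type) (d : X -> X -> R)
    (f : (nat -> R) -> (R -> X)) : Prop :=
  forall q, hcube q -> forall e : R, 0 < e ->
    exists (N : nat) (delta : R), 0 < delta /\
      forall q', hcube q' -> (forall i, (i < N)%N -> `|q' i - q i| < delta) ->
        Mdist d (f q) (f q') < e.

(* B (a subset of M(X)) is of type Z in M(X): continuous maps Q -> M(X) \ B
   are dense in C(Q, M(X)) for the uniform topology. *)
Definition typeZ (R : realType) (X : Type) (d : X -> X -> R) (B : set (R -> X))
    : Prop :=
  forall f : (nat -> R) -> (R -> X),
    (forall q, hcube q -> MX d (f q)) -> cont_Q d f ->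
    forall e : R, 0 < e ->
      exists g : (nat -> R) -> (R -> X),
        (forall q, hcube q -> MX d (g q) /\ ~ B (g q)) /\ cont_Q d g /\
        (forall q, hcube q -> Mdist d (f q) (g q) < e).

Definition M_open (R : realType) (X : Type) (d : X -> X -> R) (U : set (R -> X))
    : Prop :=
  forall u, U u -> MX d u -> exists2 e : R, 0 < e &
    forall w, MX d w -> Mdist d u w < e -> U w.

Definition M_compact (R : realType) (X : Type) (d : X -> X -> R) (K : set (R -> X))
    : Prop :=
  K `<=` MX d /\
  forall (I : Type) (U : I -> set (R -> X)),
    (forall i, M_open d (U i)) -> K `<=` \bigcup_i U i ->
    exists F : set I, finite_set F /\ K `<=` \bigcup_(i in F) U i.

Definition M_closure (R : realType) (X : Type) (d : X -> X -> R) (B : set (R -> X))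
    : set (R -> X) :=
  fun u => MX d u /\ forall e : R, 0 < e -> exists w, B w /\ Mdist d u w < e.

(* Phi_n (n >= 1, written n.+1): a on [0, 1/n), u on [1/n, 1] *)
Definition Phi (R : realType) (X : Type) (n : nat) (a : X) (u : R -> X) : R -> X :=
  fun t => if t < (n.+1%:R)^-1 then a else u t.

(* Phi_n u differs from u only on [0, 1/n), where it is the constant a outside A: a class
   with an A-valued representative cannot take the value a on a set of positive measure,
   and since d is bounded by M, Phi_n u lies within M/n of u uniformly in u.  Composing a
   map Q -> M(X) with Phi_n therefore gives a uniformly close map avoiding M(A).
   For the closure: if u is approximated by A-valued classes, then for each r > 0 the set
   where u is r-far from A has measure at most Mdist(u, w)/r for every such w, so it is
   null and u is a.e. in the closure of A.  Conversely separability gives a sequence in A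
   that is e-dense in the closure of A, and choosing at each t the first term within e of
   u t is a measurable A-valued selection within e of u. *)

From mathcomp Require Import all_boot all_order all_algebra.
From mathcomp Require Import all_classical all_reals all_analysis.
From mathcomp Require Import measurable_realfun lra.
Import Order.TTheory GRing.Theory Num.Theory.
Local Open Scope classical_set_scope.
Local Open Scope ring_scope.

(* The nonnegative integral is a supremum over simple functions below the integrand, so
   monotonicity needs no measurability; t |-> d (u t) (w t) is not known to be
   measurable. *)
Lemma ge0_le_integral_nonmeasurable d (T : measurableType d) (R : realType)
    (mu : {measure set T -> \bar R}) (D : set T) (f g : T -> \bar R) :
  (forall x, D x -> (0 <= f x)%E) -> (forall x, D x -> (f x <= g x)%E) ->
  (\int[mu]_(x in D) f x <= \int[mu]_(x in D) g x)%E.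
Proof.
move=> f0 fg.
have g0 x : D x -> (0 <= g x)%E by move=> Dx; exact: le_trans (f0 _ Dx) (fg _ Dx).
rewrite (ge0_integralE _ f0) (ge0_integralE _ g0).
apply: ereal_sup_le => _ [h hf <-]; exists h => //= x.
apply: le_trans (hf x) _; rewrite /patch; case: ifP => // /[!inE] Dx; exact: fg.
Qed.

Lemma ex_minnE (P : pred nat) (h : exists n, P n) (i : nat) :
  ex_minn h = i <-> P i /\ forall j, (j < i)%N -> ~~ P j.
Proof.
case: ex_minnP => m Pm minm; split => [<-|[Pi minP]].
  by split=> // j jm; apply/negP => /minm; rewrite leqNgt jm.
apply/eqP; rewrite eqn_leq minm //= leqNgt; apply/negP => /minP.
by rewrite Pm.
Qed.

Lemma exists_inv_nat_lt {R : realType} {e : R} :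
  0 < e -> exists k : nat, k.+1%:R^-1 < e.
Proof.
move=> e0; exists (Num.truncn e^-1).
by rewrite -[ltRHS]invrK ltf_pV2 ?posrE ?invr_gt0 ?truncnS_gt.
Qed.

Section UnitInterval.
Context {R : realType}.
Notation mu := (@completed_lebesgue_measure R).
Notation I := (@I01 R : set (LebT R)).

Lemma measurable_itv_LebT (i : interval R) : measurable ([set` i] : set (LebT R)).
Proof. apply: sub_caratheodory; exact: measurable_itv. Qed.

Lemma measurable_I01 : measurable I.
Proof. exact: measurable_itv_LebT. Qed.

Lemma I01_0 : I 0.
Proof. by rewrite /I01 /= in_itv /= lexx ler01. Qed.

Lemma completed_lebesgue_itv (i : interval R) :
  mu ([set` i] : set (LebT R)) = lebesgue_measure ([set` i] : set R).
Proof. by []. Qed.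

Lemma completed_lebesgue_I01 : mu I = 1%:E.
Proof.
by rewrite /I01 completed_lebesgue_itv lebesgue_measure_itv /= lte_fin ltr01 oppr0 adde0.
Qed.

Lemma completed_lebesgue_co0 (x : R) : 0 <= x ->
  mu ([set` `[0, x[] : set (LebT R)) = x%:E.
Proof.
move=> x0; rewrite completed_lebesgue_itv lebesgue_measure_itv /= lte_fin.
by case: ltP => [_|x0']; [rewrite oppr0 adde0|rewrite (@le_anti _ _ x 0) ?x0 ?x0'].
Qed.

Lemma integral_cst_I01 (r : R) : (\int[mu]_(t in I) r%:E = r%:E)%E.
Proof.
rewrite (integral_cst _ measurable_I01) -[RHS]mule1; congr (_ * _)%E.
exact: completed_lebesgue_I01.
Qed.

Lemma integral_cst_add_indic_I01 (r c : R) (S : set (LebT R)) :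
  measurable S -> 0 <= r -> 0 <= c ->
  (\int[mu]_(t in I) (r + c * \1_S t)%:E = r%:E + c%:E * mu (S `&` I))%E.
Proof.
move=> mS r0 c0; have mI := measurable_I01.
under eq_integral do rewrite EFinD.
rewrite ge0_integralD //; last 2 first.
- by move=> x _; rewrite lee_fin mulr_ge0.
- by apply/measurable_EFinP; apply: measurable_funM => //; exact: measurable_indic.
rewrite integral_cst_I01 (integralZl_indic _ (fun _ => S)) ?integral_indic //.
by rewrite ltNge c0.
Qed.

End UnitInterval.

Section MeasurableMaps.
Context {R : realType} {X : Type} {d : X -> X -> R}.
Notation mu := (@completed_lebesgue_measure R).
Notation I := (@I01 R : set (LebT R)).

Lemma ae_eq01_refl (u : R -> X) : ae_eq01 u u.
Proof. by exists set0; split => // t /=; apply. Qed.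

Lemma ae_eq01_eq (u w : R -> X) : ae_eq01 u w ->
  exists N : set (LebT R),
    [/\ measurable N, mu N = 0 & forall t, I t -> ~ N t -> u t = w t].
Proof.
case=> N [mN N0 sub]; exists N; split => // t It Nt.
by apply: contrapT => uw; apply: Nt; apply: sub => /(_ It).
Qed.

Lemma MX_replace (S : set (LebT R)) (a : X) (u : R -> X) :
  MX d u -> measurable (I `&` S) ->
  MX d (fun t => if `[< S t >] then a else u t).
Proof.
move=> mu0 mS U oU.
have -> : I `&` (fun t => if `[< S t >] then a else u t) @^-1` U =
    ((I `&` u @^-1` U) `\` (I `&` S)) `|` (if `[< U a >] then I `&` S else set0).
  apply/seteqP; split => t /=.
    case: asboolP => [St [It Ua]|nSt [It Uu]]; last by left; split=> // -[].
    by right; rewrite asboolT.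
  case=> [[[It Uu] nIS]|]; first by rewrite asboolF // => St; apply: nIS.
  by case: asboolP => // Ua [It St]; rewrite asboolT.
apply: measurableU; first by apply: measurableD => //; exact: mu0.
by case: asboolP.
Qed.

Lemma MX_comp_nat (b : nat -> X) (k : R -> nat) :
  (forall i, measurable (I `&` k @^-1` [set i])) -> MX d (b \o k).
Proof.
move=> mk U _.
have -> : I `&` (b \o k) @^-1` U = \bigcup_(i in b @^-1` U) (I `&` k @^-1` [set i]).
  by apply/seteqP; split => [t [It Ut]|t [i Ui [It /= ->]]]; first by exists (k t).
by apply: bigcup_measurable => i _; exact: mk.
Qed.

Lemma Phi_MX n a (u : R -> X) : MX d u -> MX d (Phi n a u).
Proof.
move=> mu0; have -> : Phi n a u =
    (fun t => if `[< [set` `]-oo, n.+1%:R^-1[] t >] then a else u t).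
  by apply/funext => t; rewrite /= asboolb in_itv.
apply: MX_replace => //.
by apply: measurableI; [exact: measurable_I01|exact: measurable_itv_LebT].
Qed.

Lemma Phi_notin_MA (A : set X) n a (u : R -> X) :
  ~ A a -> ~ MA d A (Phi n a u).
Proof.
move=> nAa [_ [w [_ [wA /ae_eq01_eq[N [mN N0 Phiw]]]]]].
set r : R := n.+1%:R^-1.
have r0 : 0 < r by rewrite invr_gt0.
have r1 : r <= 1 by rewrite invf_le1 // ler1n.
have sub : ([set` `[0, r[] : set (LebT R)) `<=` N.
  move=> t /=; rewrite in_itv /= => /andP[t0 tr].
  have It : I t by rewrite /I01 /= in_itv /= t0 (le_trans (ltW tr) r1).
  apply: contrapT => Nt; apply: nAa.
  by have := wA t It; rewrite -Phiw // /Phi -/r tr.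
have : (mu ([set` `[0%R, r[] : set (LebT R)) <= mu N)%E :=
  le_measure mu (mem_set (measurable_itv_LebT `[0, r[)) (mem_set mN) sub.
by rewrite N0 completed_lebesgue_co0 ?(ltW r0) // lee_fin leNgt r0.
Qed.

End MeasurableMaps.

Section BoundedMetric.
Context {R : realType} {X : Type} {d : X -> X -> R}.
Hypothesis d_metric : is_metric d.
Context {M : R}.
Hypothesis d_le_M : forall x y, d x y <= M.
Notation mu := (@completed_lebesgue_measure R).
Notation I := (@I01 R : set (LebT R)).

Lemma metric_ge0 x y : 0 <= d x y. Proof. by case: d_metric. Qed.
Lemma metric_xx x : d x x = 0. Proof. by case: d_metric => _ [/(_ x x) [_ ->]]. Qed.
Lemma metric_sym x y : d x y = d y x. Proof. by case: d_metric => _ [_ []]. Qed.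
Lemma metric_triangle x y z : d x z <= d x y + d y z.
Proof. by case: d_metric => _ [_ [_]]. Qed.

Lemma metric_bound_ge0 (x : X) : 0 <= M.
Proof. by rewrite -(metric_xx x) d_le_M. Qed.

Lemma integral_metric_ge0 (u w : R -> X) :
  (0 <= \int[mu]_(t in I) (d (u t) (w t))%:E)%E.
Proof. by apply: integral_ge0 => t _; rewrite lee_fin metric_ge0. Qed.

Lemma Mdist_integral (u w : R -> X) :
  (Mdist d u w)%:E = (\int[mu]_(t in I) (d (u t) (w t))%:E)%E.
Proof.
rewrite /Mdist fineK // ge0_fin_numE ?integral_metric_ge0 //.
apply: le_lt_trans (ltry M); rewrite -(integral_cst_I01 M).
by apply: ge0_le_integral_nonmeasurable => t _; rewrite lee_fin ?metric_ge0.
Qed.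

Lemma Mdist_le_integral (u w : R -> X) (G : LebT R -> \bar R) (c : R) :
  (forall t, I t -> ((d (u t) (w t))%:E <= G t)%E) ->
  (\int[mu]_(t in I) G t <= c%:E)%E -> Mdist d u w <= c.
Proof.
move=> dG Gc; rewrite -lee_fin Mdist_integral; apply: le_trans Gc.
by apply: ge0_le_integral_nonmeasurable => t It; rewrite ?lee_fin ?metric_ge0 ?dG.
Qed.

Lemma le_Mdist (u w u' w' : R -> X) :
  (forall t, I t -> d (u t) (w t) <= d (u' t) (w' t)) ->
  Mdist d u w <= Mdist d u' w'.
Proof.
move=> le_d; apply: (@Mdist_le_integral _ _ (fun t => (d (u' t) (w' t))%:E)).
  by move=> t It; rewrite lee_fin le_d.
by rewrite Mdist_integral.
Qed.

Lemma Mdist_le_ae (u w : R -> X) (N : set (LebT R)) (c : R) :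
  measurable N -> mu N = 0 -> 0 <= c ->
  (forall t, I t -> ~ N t -> d (u t) (w t) <= c) -> Mdist d u w <= c.
Proof.
move=> mN N0 c0 le_d; have M0 := metric_bound_ge0 (u 0).
apply: (@Mdist_le_integral _ _ (fun t => (c + M * \1_N t)%:E)).
  move=> t It; rewrite lee_fin /indic; have [Nt|Nt] := pselect (N t).
    by rewrite mem_set // mulr1; have := d_le_M (u t) (w t); lra.
  by rewrite memNset // mulr0 addr0 le_d.
rewrite integral_cst_add_indic_I01 //.
suff -> : mu (N `&` I) = 0%E by rewrite mule0 adde0.
apply/eqP; rewrite eq_le measure_ge0 andbT -N0.
apply: le_measure; rewrite ?inE //; exact: measurableI measurable_I01.
Qed.

Lemma Mdist_ge_measure (u w : R -> X) (S N : set (LebT R)) (c : R) :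
  measurable S -> S `<=` I -> measurable N -> mu N = 0 -> 0 <= c ->
  (forall t, S t -> ~ N t -> c <= d (u t) (w t)) ->
  (c%:E * mu S <= (Mdist d u w)%:E)%E.
Proof.
move=> mS SI mN N0 c0 le_d; have mSN : measurable (S `\` N) by exact: measurableD.
have le_SN : (mu S <= mu (S `\` N))%E.
  rewrite -[leRHS]adde0 -N0; apply: le_trans (measureU2 mu mSN mN).
  apply: le_measure; rewrite ?inE //; first exact: measurableU.
  by move=> t St; have [Nt|Nt] := pselect (N t); [right|left].
apply: le_trans (lee_wpmul2l _ le_SN) _; first by rewrite lee_fin.
have := integral_cst_add_indic_I01 0 c _ mSN (lexx 0) c0.
rewrite add0e setIidl => [<-|t [/SI//]].
rewrite Mdist_integral; apply: ge0_le_integral_nonmeasurable => t It.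
  by rewrite lee_fin add0r mulr_ge0.
rewrite lee_fin add0r /indic; have [[St Nt]|SNt] := pselect ((S `\` N) t).
  by rewrite mem_set // mulr1 le_d.
by rewrite memNset // mulr0 metric_ge0.
Qed.

Lemma Mdist_Phi_le n a (u : R -> X) : Mdist d (Phi n a u) u <= M * n.+1%:R^-1.
Proof.
set r : R := n.+1%:R^-1; set S : set (LebT R) := [set` `[0, r[].
have r1 : r <= 1 by rewrite invf_le1 // ler1n.
have SI : S `<=` I.
  by move=> t; rewrite /S /I01 /= !in_itv /= => /andP[-> /ltW/le_trans->].
have M0 := metric_bound_ge0 a.
apply: (@Mdist_le_integral _ _ (fun t => (0 + M * \1_S t)%:E)).
  move=> t It; rewrite lee_fin add0r /Phi -/r; case: ifPn => [tr|_].
    have [t0 _] : 0 <= t /\ t <= 1 by move: It; rewrite /I01 /= in_itv => /andP.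
    by rewrite /indic mem_set ?mulr1 ?d_le_M // /S /= in_itv /= t0 tr.
  by rewrite metric_xx // mulr_ge0.
rewrite integral_cst_add_indic_I01 ?(setIidl SI) ?completed_lebesgue_co0 ?invr_ge0 //.
  by rewrite add0e.
exact: measurable_itv_LebT.
Qed.

Lemma Mdist_Phi_Phi n a (u w : R -> X) :
  Mdist d (Phi n a u) (Phi n a w) <= Mdist d u w.
Proof.
apply: le_Mdist => t _; rewrite /Phi.
by case: ifP => _; rewrite ?metric_xx ?metric_ge0.
Qed.

Lemma Phi_cvg_uniform {e : R} : 0 < e -> exists N : nat,
  forall n, (N <= n)%N -> forall a (u : R -> X), Mdist d (Phi n a u) u < e.
Proof.
move=> e0; have M1 : 0 < `|M| + 1 by rewrite ltr_wpDl.
have [k ke] := exists_inv_nat_lt (divr_gt0 e0 M1).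
exists k => n kn a u; apply: le_lt_trans (Mdist_Phi_le n a u) _.
have nk : n.+1%:R^-1 <= k.+1%:R^-1 :> R by rewrite lef_pV2 ?posrE // ler_nat.
have n0 : 0 <= n.+1%:R^-1 :> R by rewrite invr_ge0.
move: ke; rewrite ltr_pdivlMr // => ke.
set x := k.+1%:R^-1 in nk ke *; set y := n.+1%:R^-1 in nk n0 *.
have := ler_norm M; have := normr_ge0 M; nra.
Qed.

Lemma Mdist_sym (u w : R -> X) : Mdist d u w = Mdist d w u.
Proof. by apply/le_anti; rewrite !le_Mdist // => t _; rewrite metric_sym. Qed.

Lemma MA_typeZ (A : set X) (a : X) : ~ A a -> typeZ d (MA d A).
Proof.
move=> nAa f fM fc e e0; have [k Phik] := Phi_cvg_uniform e0.
exists (fun q => Phi k a (f q)); split; [|split].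
- by move=> q hq; split; [exact: Phi_MX (fM q hq)|exact: Phi_notin_MA].
- move=> q hq e' e'0; have [N [del [del0 fcq]]] := fc q hq e' e'0.
  exists N, del; split => // q' hq' hN.
  exact: le_lt_trans (Mdist_Phi_Phi _ _ _ _) (fcq q' hq' hN).
- by move=> q _; rewrite Mdist_sym; exact: Phik.
Qed.

Lemma d_open_ball (y : X) (e : R) : d_open d [set x | d x y < e].
Proof.
move=> x /= xy; exists (e - d x y) => [|z xz]; first by rewrite subr_gt0.
by have := metric_triangle z x y; rewrite (metric_sym z x) /=; lra.
Qed.

Definition far_from (A : set X) (r : R) : set X :=
  [set x | exists2 s, r < s & forall y, A y -> s <= d x y].

Lemma d_open_far_from (A : set X) (r : R) : d_open d (far_from A r).
Proof.
move=> x [s rs As]; exists (s - r) => [|z xz]; first by rewrite subr_gt0.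
exists (s - d x z) => [|y Ay]; first lra.
by have := As y Ay; have := metric_triangle x z y; lra.
Qed.

Lemma setC_d_closure (A : set X) :
  ~` d_closure d A = \bigcup_k far_from A k.+1%:R^-1.
Proof.
apply/seteqP; split => x /=.
  move=> nAx; apply: contrapT => nfar; apply: nAx => e e0.
  have [k ke] := exists_inv_nat_lt e0.
  apply: contrapT => nnear; apply: nfar; exists k => //; exists e => // y Ay.
  by rewrite leNgt; apply/negP => xy; apply: nnear; exists y.
move=> [k _ [s ks As]] Ax.
have s0 : 0 < s by apply: lt_trans ks; rewrite invr_gt0.
by have [y [Ay xy]] := Ax s s0; have := As y Ay; rewrite leNgt xy.
Qed.

Lemma far_from_preimage_null (A : set X) (u : R -> X) (r : R) : 0 < r ->
  M_closure d (MA d A) u -> mu (I `&` u @^-1` far_from A r) = 0.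
Proof.
move=> r0 [mu0 ucl]; have mF := mu0 _ (d_open_far_from A r).
apply/eqP; rewrite eq_le measure_ge0 andbT; apply/lee_addgt0Pr => e e0.
have [w [[_ [w' [_ [w'A /ae_eq01_eq[N [mN N0 ww']]]]]] uw]] :=
  ucl _ (mulr_gt0 r0 e0).
rewrite add0e -(lee_pmul2l (x := r%:E)) ?lte_fin // -EFinM.
apply: le_trans (@Mdist_ge_measure u w _ _ r mF _ mN N0 (ltW r0) _) _.
- by move=> t [].
- move=> t [It [s rs As]] Nt; rewrite ww' //.
  exact: le_trans (ltW rs) (As _ (w'A t It)).
- by rewrite lee_fin ltW.
Qed.

Lemma M_closure_MA_sub (A : set X) (u : R -> X) :
  M_closure d (MA d A) u -> MA d (d_closure d A) u.
Proof.
move=> ucl; have [mu0 near] := ucl.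
have [a0 Aa0] : exists a0, A a0.
  by have [_ [[_ [w [_ [wA _]]]] _]] := near 1 ltr01; exists (w 0); exact: wA I01_0.
have Ca0 : d_closure d A a0 by move=> e e0; exists a0; rewrite metric_xx.
set Q := I `&` u @^-1` (~` d_closure d A).
have QE : Q = \bigcup_k (I `&` u @^-1` far_from A k.+1%:R^-1).
  by rewrite /Q setC_d_closure preimage_bigcup setI_bigcupr.
have mQ : measurable Q.
  by rewrite QE; apply: bigcupT_measurable => k; exact: mu0 _ (d_open_far_from _ _).
have Q0 : mu.-negligible Q.
  rewrite QE; apply: negligible_bigcup => k.
  apply/negligibleP; first exact: mu0 _ (d_open_far_from _ _).
  by apply: far_from_preimage_null; rewrite ?invr_gt0.
pose v t := if `[< (u @^-1` ~` d_closure d A) t >] then a0 else u t.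
split => //; exists v; split; [exact: MX_replace|split].
  by move=> t _; rewrite /v; case: asboolP => // /contrapT.
apply: negligibleS Q0 => t /=; rewrite /v; case: asboolP => [nC uv|_ uu]; last by exfalso; apply: uu.
by split => //; apply: contrapT => It; apply: uv.
Qed.

Lemma separable_seq : separable_metric d -> X ->
  exists s : nat -> X, forall x (e : R), 0 < e -> exists i, d x (s i) < e.
Proof.
case=> S [/countable_injP[f finj] Sdense] x0.
have [s0 [Ss0 _]] := Sdense x0 1 ltr01.
pose s i := if pselect (exists2 x, S x & f x = i) is left h
  then projT1 (cid2 h) else s0.
exists s => x e e0; have [y [Sy xy]] := Sdense x e e0.
exists (f y); rewrite /s; case: pselect => [h|[]]; last by exists y.
case: cid2 => z Sz /finj fzy /=; rewrite fzy ?inE //.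
Qed.

Lemma closure_net (A : set X) (a0 : X) (e : R) :
  separable_metric d -> A a0 -> 0 < e -> exists b : nat -> X,
    (forall i, A (b i)) /\ forall x, d_closure d A x -> exists i, d x (b i) < e.
Proof.
move=> sep Aa0 e0; have [s sdense] := separable_seq sep a0.
have e4 : 0 < e / 4 by rewrite divr_gt0.
pose b i := if pselect (exists2 y, A y & d (s i) y < e / 2) is left h
  then projT1 (cid2 h) else a0.
exists b; split => [i|x Ax].
  by rewrite /b; case: pselect => // h; case: cid2.
have [y [Ay xy]] := Ax _ e4; have [i xi] := sdense x _ e4.
exists i; rewrite /b; case: pselect => [h|[]]; last first.
  exists y => //; have := metric_triangle (s i) x y.
  by rewrite (metric_sym (s i) x); lra.
by case: cid2 => z _ iz /=; have := metric_triangle x (s i) z; lra.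
Qed.

Lemma measurable_select (A : set X) (a0 : X) (b : nat -> X) (e : R) (u : R -> X) :
  A a0 -> (forall i, A (b i)) -> MX d u ->
  exists v : R -> X, [/\ MX d v, forall t, A (v t) &
    forall t, (exists i, d (u t) (b i) < e) -> d (u t) (v t) < e].
Proof.
move=> Aa0 bA mu0.
pose k t := if pselect (exists i, d (u t) (b i) < e) is left h
  then (ex_minn h).+1 else 0%N.
pose b' i := if i is j.+1 then b j else a0.
pose B j := I `&` [set t | d (u t) (b j) < e].
have mB j : measurable (B j) by exact: mu0 _ (d_open_ball _ _).
exists (b' \o k); split.
- apply: MX_comp_nat => -[|i].
  + have -> : I `&` k @^-1` [set 0%N] = I `\` \bigcup_j B j.
      apply/seteqP; split => t [It]; rewrite /k /=.
        by case: pselect => // nB _; split => // -[j _ [_ Bj]]; apply: nB; exists j.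
      by case: pselect => // -[j Bj] nB; exfalso; apply: nB; exists j.
    by apply: measurableD; [exact: measurable_I01|exact: bigcupT_measurable].
  + have -> : I `&` k @^-1` [set i.+1] =
        B i `\` \bigcup_(j in [set j | (j < i)%N]) B j.
      apply/seteqP; split => t /=; rewrite /k.
        case: pselect => [h [It /succn_inj/ex_minnE[Bi minB]]|_ [_ //]].
        by split=> // -[j ji [_ Bj]]; move: (minB j ji); rewrite Bj.
      move=> [[It Bi] nB]; split => //; case: pselect => [h|[]]; last by exists i.
      congr S; apply/ex_minnE; split => // j ji; apply/negP => Bj.
      by apply: nB; exists j => //; split.
    by apply: measurableD => //; exact: bigcup_measurable.
- by move=> t; rewrite /= /k; case: pselect => // h; exact: bA.
- by move=> t ub; rewrite /= /k; case: pselect => // h; case: ex_minnP.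
Qed.

Lemma MA_closure_sub_M_closure (A : set X) (u : R -> X) : separable_metric d ->
  MA d (d_closure d A) u -> M_closure d (MA d A) u.
Proof.
move=> sep [mu0 [w [_ [wC /ae_eq01_eq[N [mN N0 uw]]]]]]; split => // e e0.
have [a0 Aa0] : exists a0, A a0 by have [y [Ay _]] := wC 0 I01_0 1 ltr01; exists y.
have e2 : 0 < e / 2 by rewrite divr_gt0.
have [b [bA bnet]] := @closure_net A a0 _ sep Aa0 e2.
have [v [mv vA uv]] := @measurable_select A a0 b (e / 2) u Aa0 bA mu0.
exists v; split.
  by split => //; exists v; split => //; split => //; exact: ae_eq01_refl.
apply: le_lt_trans (@Mdist_le_ae u v N (e / 2) mN N0 (ltW e2) _) _; last lra.
by move=> t It Nt; apply/ltW/uv; rewrite uw //; exact: bnet (wC t It).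
Qed.

End BoundedMetric.

Theorem mainTheorem5 (R : realType) (X : Type) (d : X -> X -> R) (A : set X) :
  is_metric d -> bounded_metric d -> separable_metric d ->
  (exists a : X, ~ A a) ->
  typeZ d (MA d A) /\
  (forall a : X, ~ A a ->
     (forall (n : nat) (u : R -> X), MX d u ->
        MX d (Phi n a u) /\ ~ MA d A (Phi n a u)) /\
     (forall K : set (R -> X), M_compact d K ->
        forall e : R, 0 < e -> exists N : nat, forall n : nat, (N <= n)%N ->
          forall u, K u -> Mdist d (Phi n a u) u < e)) /\
  (forall u : R -> X, M_closure d (MA d A) u <-> MA d (d_closure d A) u).
Proof.
move=> dm [M dM] sep [a nAa]; split; [exact: (MA_typeZ dm dM A a nAa)|split].
- move=> b nAb; split=> [n u mu|K _ e e0].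
    by split; [exact: Phi_MX|exact: Phi_notin_MA].
  (* The convergence is uniform on all of M(X). *)
  have [N PhiN] := Phi_cvg_uniform dm dM e0.
  by exists N => n Nn u _; exact: PhiN.
- move=> u; split; first exact: (M_closure_MA_sub dm dM).
  exact: (MA_closure_sub_M_closure dm dM A u sep).
Qed.
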